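(* Let $m\ge 2$ and let $X(0),X(1),\dots$ be i.i.d. random vectors in $\mathbb{R}^m$ (on a common probability space) whose components satisfy $X_{\min,i}\le X_i(k)\le X_{\max,i}$ almost surely, where $X_{\max,i}<\infty$ and $X_{\min,i}>-1$, and where at least one component equals a constant $r\ge 0$ almost surely. For $n\ge 1$ let $\mathcal{X}_{n,i}:=\prod_{k=0}^{n-1}(1+X_i(k))-1$, $\mathcal{X}_n=(\mathcal{X}_{n,1},\dots,\mathcal{X}_{n,m})^T$, $\mathcal{K}:=\{K\in\mathbb{R}^m: K_i\ge 0,\ \sum_i K_i=1\}$, and for each $n$ let $K^*_n\in\mathcal{K}$ maximize $g_n(K):=\frac{1}{n}\mathbb{E}[\log(1+K^T\mathcal{X}_n)]$ over $\mathcal{K}$. Then for every $K\in\mathcal{K}$, $$\limsup_{n\to\infty}\frac{1}{n}\log\frac{1+K^T\mathcal{X}_n}{1+{K_n^*}^T\mathcal{X}_n}\le 0\quad\text{almost surely.}$$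
   Context: $X_i(k)$ is the return of asset $i$ at step $k$; components may be arbitrarily correlated; $n$ is the rebalancing period and $K_n^*$ a Kelly optimal feedback gain for that period. *)

From HB Require Import structures.
From mathcomp Require Import all_boot all_order all_algebra.
From mathcomp Require Import all_classical all_reals all_analysis.
Set Implicit Arguments. Unset Strict Implicit. Unset Printing Implicit Defensive.
Import Order.TTheory GRing.Theory Num.Theory.
Local Open Scope classical_set_scope.
Local Open Scope ring_scope.

(* A sequence of random vectors in R^m is represented componentwise:
   X k i : T -> R is the i-th component of the k-th vector X(k). *)

Definition rect_event {T : Type} {R : realType} {m : nat}
  (Y : 'I_m -> T -> R) (B : 'I_m -> set R) : set T :=
  \bigcap_(i in [set: 'I_m]) (Y i @^-1` B i).

(* Mutual independence of the random vectors X(0), X(1), ...: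
   product rule over every finite subfamily, for measurable rectangles
   (rectangles form a pi-system generating the Borel sets of R^m). *)
Definition vec_independent {d} {T : measurableType d} {R : realType} {m : nat}
  (P : probability T R) (X : nat -> 'I_m -> T -> R) : Prop :=
  forall (S : seq nat) (B : nat -> 'I_m -> set R),
    uniq S -> (forall k i, measurable (B k i)) ->
    P (\bigcap_(k in [set k | k \in S]) rect_event (X k) (B k))
    = (\prod_(k <- S) P (rect_event (X k) (B k)))%E.

(* Identical distribution: every X(k) has the law of X(0)
   (checked on measurable rectangles, which determine the law on R^m). *)
Definition vec_ident_distrib {d} {T : measurableType d} {R : realType} {m : nat}
  (P : probability T R) (X : nat -> 'I_m -> T -> R) : Prop :=
  forall (k : nat) (B : 'I_m -> set R), (forall i, measurable (B i)) ->
    P (rect_event (X k) B) = P (rect_event (X 0%N) B).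

Definition cumret {T : Type} {R : realType} {m : nat}
  (X : nat -> 'I_m -> T -> R) (n : nat) (i : 'I_m) (w : T) : R :=
  \prod_(k < n) (1 + X k i w) - 1.

Definition wealth {T : Type} {R : realType} {m : nat}
  (X : nat -> 'I_m -> T -> R) (n : nat) (K : 'I_m -> R) (w : T) : R :=
  1 + \sum_(i < m) K i * cumret X n i w.

Definition simplexK {R : realType} {m : nat} : set ('I_m -> R) :=
  [set K | (forall i, 0 <= K i) /\ \sum_(i < m) K i = 1].

Definition gn {d} {T : measurableType d} {R : realType} {m : nat}
  (P : probability T R) (X : nat -> 'I_m -> T -> R) (n : nat) (K : 'I_m -> R)
  : \bar R :=
  ((n%:R)^-1)%:E * (\int[P]_w (ln (wealth X n K w))%:E)%E.

From HB Require Import structures.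
From mathcomp Require Import all_boot all_order all_algebra.
From mathcomp Require Import all_classical all_reals all_analysis.
From mathcomp Require Import measurable_realfun.
From mathcomp Require Import ring lra.
Set Implicit Arguments. Unset Strict Implicit. Unset Printing Implicit Defensive.
Import Order.TTheory GRing.Theory Num.Theory.
Local Open Scope classical_set_scope.
Local Open Scope ring_scope.

(* Off a null set the one-period gross returns lie in [c, C] with c > 0, so all
   wealths W_n(K) are bounded away from 0 and oo.  As K*_n maximises
   E[log W_n(.)], the right derivative at t = 0 of
   t |-> E[log W_n(K*_n + t (K - K*_n))], namely E[W_n(K) / W_n(K*_n)] - 1, is
   nonpositive; a second-order lower bound on the logarithm replaces the
   differentiation.  Markov's inequality then gives
   P[(1/n) log (W_n(K) / W_n(K*_n)) > e] <= exp(-n e), which is summable, and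
   the first Borel--Cantelli lemma bounds the lim sup. *)

Lemma measurable_inv (R : realType) : measurable_fun [set: R] (@GRing.inv R).
Proof.
rewrite -(setUCr [set 0]); apply/measurable_funU => //; first exact: measurableC.
split; first exact: measurable_fun_set1.
apply: open_continuous_measurable_fun; first exact/closed_openC/closed_eq.
by move=> x /set_mem/eqP x0; exact: inv_continuous.
Qed.

Section real_inequalities.
Variable R : realType.
Implicit Types L U a b t x M : R.

Lemma lerp_bounds L U a b t : L <= a <= U -> L <= b <= U -> 0 <= t <= 1 ->
  L <= a + t * (b - a) <= U.
Proof. by move=> /andP[? ?] /andP[? ?] /andP[? ?]; apply/andP; split; nra. Qed.

Lemma normr_ln_le L U x : 0 < L -> L <= x <= U -> `|ln x| <= `|ln L| + `|ln U|.
Proof.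
move=> L0 /andP[Lx xU]; have x0 : 0 < x by apply: lt_le_trans Lx.
have U0 : 0 < U by apply: lt_le_trans xU.
have lnLx : ln L <= ln x by rewrite ler_ln ?posrE.
have lnxU : ln x <= ln U by rewrite ler_ln ?posrE.
have := ler_norm (ln U); have := ler_norm (- ln L); rewrite normrN.
have := normr_ge0 (ln U); have := normr_ge0 (ln L).
by rewrite ler_norml => *; apply/andP; split; lra.
Qed.

(* From [ln y <= y - 1] at [y = a / (a + t (b - a))]. *)
Lemma ln_lerp_ge L U a b t : 0 < L -> L <= a <= U -> L <= b <= U -> 0 < t <= 1 ->
  t * (b / a - 1) - t ^+ 2 * (U ^+ 2 / L ^+ 2) <= ln (a + t * (b - a)) - ln a.
Proof.
move=> L0 ha hb /andP[t0 t1].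
have /andP[Lc _] : L <= a + t * (b - a) <= U.
  by apply: lerp_bounds => //; rewrite ltW.
have /andP[La aU] := ha; have /andP[Lb bU] := hb.
set c := a + t * (b - a) in Lc *.
have a0 : 0 < a by apply: lt_le_trans La.
have c0 : 0 < c by apply: lt_le_trans Lc.
have ln_ac : ln a - ln c <= a / c - 1.
  rewrite -ln_div ?posrE //; have := @le_ln1Dx R (a / c - 1).
  by rewrite addrCA subrr addr0; apply; rewrite ltrBrDl addrN divr_gt0.
have lhsE : t * (b / a - 1) - t ^+ 2 * ((b - a) ^+ 2 / (a * c)) = 1 - a / c.
  by rewrite /c; field; rewrite !gt_eqF -/c.
have ratio_le : (b - a) ^+ 2 / (a * c) <= U ^+ 2 / L ^+ 2.
  have ba2 : (b - a) ^+ 2 <= U ^+ 2 by nra.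
  have ac : L ^+ 2 <= a * c by nra.
  apply: ler_pM => //; first exact: sqr_ge0.
    by rewrite invr_ge0 mulr_ge0 ?ltW.
  by rewrite lef_pV2 ?posrE ?exprn_gt0 ?mulr_gt0.
have : t ^+ 2 * ((b - a) ^+ 2 / (a * c)) <= t ^+ 2 * (U ^+ 2 / L ^+ 2).
  by rewrite ler_wpM2l ?sqr_ge0.
lra.
Qed.

Lemma le0_of_le_small_mul x M :
  0 <= M -> (forall t, 0 < t <= 1 -> x <= t * M) -> x <= 0.
Proof.
move=> M0 xtM; rewrite leNgt; apply/negP => x0.
pose t := Num.min 1 (x / (M + 1)).
have t0 : 0 < t by rewrite lt_min ltr01 divr_gt0 //; lra.
have /xtM xt : 0 < t <= 1 by rewrite t0 ge_min lexx.
have : t * (M + 1) <= x.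
  by rewrite -ler_pdivlMr ?ge_min ?lexx ?orbT //; lra.
nra.
Qed.

End real_inequalities.

Section wealth.
Context {T : Type} {R : realType} {m : nat}.
Implicit Types (X : nat -> 'I_m -> T -> R) (K : 'I_m -> R).

Definition lerp_portfolio K' K (t : R) : 'I_m -> R := fun i => K' i + t * (K i - K' i).

Lemma simplex_lerp K' K t : simplexK K' -> simplexK K -> 0 <= t <= 1 ->
  simplexK (lerp_portfolio K' K t).
Proof.
move=> [K'0 K'1] [K0 K1] /andP[t0 t1]; split.
  by move=> i; have := K0 i; have := K'0 i; rewrite /lerp_portfolio; nra.
by rewrite big_split /= -mulr_sumr sumrB K1 K'1 subrr mulr0 addr0.
Qed.

Lemma wealth_lerp X n K' K t w :
  wealth X n (lerp_portfolio K' K t) w =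
  wealth X n K' w + t * (wealth X n K w - wealth X n K' w).
Proof.
rewrite /wealth /lerp_portfolio opprD addrACA subrr add0r -addrA -sumrB mulr_sumr.
by rewrite -big_split /=; congr (1 + _); apply: eq_bigr => i _; ring.
Qed.

Lemma wealth_simplexE X n K w : simplexK K ->
  wealth X n K w = \sum_(i < m) K i * \prod_(k < n) (1 + X k i w).
Proof.
case=> _ K1; rewrite /wealth /cumret.
under eq_bigr do rewrite mulrBr mulr1.
by rewrite sumrB K1 addrC subrK.
Qed.

Lemma wealth_bounds X n K w c C : 0 <= c ->
  (forall k i, c <= 1 + X k i w <= C) -> simplexK K ->
  c ^+ n <= wealth X n K w <= C ^+ n.
Proof.
move=> c0 XcC sK; rewrite wealth_simplexE //; case: sK => K0 K1.
have prod_bounds i : c ^+ n <= \prod_(k < n) (1 + X k i w) <= C ^+ n.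
  have prod_cst (x : R) : x ^+ n = \prod_(k < n) x by rewrite prodr_const card_ord.
  rewrite !prod_cst.
  apply/andP; split; apply: ler_prod => k _; have /andP[cX XC] := XcC k i.
    by rewrite c0 cX.
  by rewrite XC (le_trans c0 cX).
have convex_cst (x : R) : x = \sum_(i < m) K i * x by rewrite -mulr_suml K1 mul1r.
rewrite [c ^+ n]convex_cst [C ^+ n]convex_cst.
by apply/andP; split; apply: ler_sum => i _; apply: ler_wpM2l => //;
  case/andP: (prod_bounds i).
Qed.

End wealth.

Lemma measurable_wealth d (T : measurableType d) (R : realType) m
    (X : nat -> 'I_m -> T -> R) n K :
  (forall k i, measurable_fun setT (X k i)) -> measurable_fun setT (wealth X n K).
Proof.
move=> mX; apply: measurable_funD => //; apply: measurable_sum => i.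
apply: measurable_funM => //; apply: measurable_funB => //.
by apply: measurable_prod => k _; apply: measurable_funD.
Qed.

Definition relative_growth {T : Type} {R : realType} {m : nat}
    (X : nat -> 'I_m -> T -> R) n (K K' : 'I_m -> R) (w : T) : R :=
  (n%:R)^-1 * ln (wealth X n K w / wealth X n K' w).

Definition kelly_optimal {d} {T : measurableType d} {R : realType} {m : nat}
    (P : probability T R) (X : nat -> 'I_m -> T -> R) n (K' : 'I_m -> R) :=
  simplexK K' /\ forall K, simplexK K -> (gn P X n K <= gn P X n K')%E.

Section measurability.
Context {d} {T : measurableType d} {R : realType}.

Lemma measurable_superlevel (f : T -> R) a :
  measurable_fun setT f -> measurable [set w | a < f w].
Proof.
by move=> mf; have := mf measurableT _ (measurable_itv `]a, +oo[);
  rewrite setTI preimage_itvoy.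
Qed.

Lemma measurable_relative_growth m (X : nat -> 'I_m -> T -> R) n K K' :
  (forall k i, measurable_fun setT (X k i)) ->
  measurable_fun setT (relative_growth X n K K').
Proof.
move=> mX; apply: measurable_funM => //; apply: measurableT_comp => //.
apply: measurable_funM; first exact: measurable_wealth.
by apply: measurableT_comp; [exact: measurable_inv | exact: measurable_wealth].
Qed.

End measurability.

Lemma markov_setI d (T : measurableType d) (R : realType)
    (mu : {measure set T -> \bar R}) (D : set T) (f : T -> R) (a : R) :
  measurable D -> measurable_fun setT f -> (forall w, D w -> 0 <= f w) -> 0 <= a ->
  (a%:E * mu (D `&` [set w | (a < f w)%R]) <= \int[mu]_(w in D) (f w)%:E)%E.
Proof.
move=> mD mf f0 a0; have mDa := measurableI _ _ mD (measurable_superlevel a mf).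
have mf' : measurable_fun setT (EFin \o f) by exact/measurable_EFinP.
rewrite -integral_cst //.
apply: (@le_trans _ _ (\int[mu]_(w in D `&` [set w | (a < f w)%R]) (f w)%:E)%E).
  apply: ge0_le_integral => //; first exact: measurable_funS mf'.
  by move=> w [_ /ltW]; rewrite lee_fin.
by apply: ge0_subset_integral => //; exact: measurable_funS mf'.
Qed.

Lemma nneseries_geometric_lty (R : realType) (q : R) : 0 <= q < 1 ->
  (\sum_(n <oo) (q ^+ n)%:E < +oo)%E.
Proof.
move=> /andP[q0 q1]; have q1' : `|q| < 1 by rewrite ger0_norm.
have -> : (fun N => \sum_(0 <= n < N) (q ^+ n)%:E)%E = EFin \o series (geometric 1 q).
  apply/funext => N /=; rewrite sumEFin /series /=; congr (_%:E).
  by apply: eq_bigr => k _; rewrite /geometric mul1r.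
by rewrite EFin_lim ?ltry //; exact: is_cvg_geometric_series.
Qed.

Lemma limn_esup_le_near (R : realType) (u : (\bar R)^nat) (l : \bar R) :
  (\forall n \near \oo, (u n <= l)%E) -> (limn_esup u <= l)%E.
Proof.
move=> [N _ ul]; rewrite limn_esup_lim; apply: lime_le; first exact: is_cvg_esups.
exists N => // n /= Nn; apply: ge_ereal_sup => _ [k /= nk <-].
by apply: ul; exact: leq_trans nk.
Qed.

(* First Borel--Cantelli lemma, applied along the thresholds [1 / (j + 1)]. *)
Lemma ae_limn_esup_le0 d (T : measurableType d) (R : realType)
    (mu : {measure set T -> \bar R}) (u : nat -> T -> R) :
  (forall n, measurable_fun setT (u n)) ->
  (forall e, 0 < e -> (\sum_(n <oo) mu [set w | (e < u n w)%R] < +oo)%E) ->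
  {ae mu, forall w, (limn_esup (fun n => (u n w)%:E) <= 0)%E}.
Proof.
move=> measurable_u summable.
pose F j n := [set w | (j.+1%:R)^-1 < u n w].
have mF j n : measurable (F j n) by exact: measurable_superlevel.
have null_limsup j : {ae mu, forall w, ~ lim_sup_set (F j) w}.
  exists (lim_sup_set (F j)); split => [||w /= /contrapT] //.
    by apply: bigcap_measurable => // k _; apply: bigcup_measurable.
  by apply: lim_sup_set_cvg0 => //; apply: summable; rewrite invr_gt0.
apply: filterS (ae_foralln null_limsup) => w notF.
apply/lee_addgt0Pr => e e0; rewrite add0e.
pose j := Num.truncn e^-1.
have je : (j.+1%:R)^-1 < e.
  by rewrite -[e]invrK ltf_pV2 ?posrE ?invr_gt0 ?ltr0n //; exact: truncnS_gt.
apply: (@le_trans _ _ (j.+1%:R^-1)%:E); last by rewrite lee_fin ltW.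
apply: limn_esup_le_near.
have [M /= FM] : exists M, forall n, (M <= n)%N -> ~ F j n w.
  apply: contrapT => noM; apply: (notF j) => M _; apply: contrapT => noF.
  by apply: noM; exists M => n Mn Fn; apply: noF; exists n.
by exists M => // n /= /FM; rewrite /F /= lee_fin leNgt => /negP.
Qed.

Section off_null_set.
Context {d} {T : measurableType d} {R : realType} (P : probability T R) (N : set T).
Hypotheses (mN : measurable N) (PN0 : P N = 0%E).

Definition bounded_off (f : T -> R) :=
  measurable_fun setT f /\ exists M, forall w, ~ N w -> `|f w| <= M.

Let mNC : measurable (~` N). Proof. exact: measurableC. Qed.

Lemma probability_setC_null : P (~` N) = 1%E.
Proof. by rewrite probability_setC // PN0 sube0. Qed.

Lemma bounded_off_integrable f : bounded_off f -> P.-integrable (~` N) (EFin \o f).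
Proof.
move=> [mf [M fM]]; apply: measurable_bounded_integrable => //.
- by rewrite (le_lt_trans (probability_le1 _ mNC)) ?ltry.
- exact: measurable_funS mf.
- exists M; split; first exact: num_real.
  by move=> x Mx w Nw; apply: le_trans (fM w Nw) (ltW Mx).
Qed.

Lemma integral_setC_bounded_off f : bounded_off f ->
  (\int[P]_(w in ~` N) (f w)%:E = (\int[P]_(w in ~` N) f w)%:E)%E.
Proof. by move=> bf; rewrite fineK // integrable_fin_num // bounded_off_integrable. Qed.

Lemma integral_bounded_off f : bounded_off f ->
  (\int[P]_w (f w)%:E = (\int[P]_(w in ~` N) f w)%:E)%E.
Proof.
move=> bf; rewrite -integral_setC_bounded_off // -setTD -negligible_integral //.
have [mf [M fM]] := bf; apply/integrableP; split; first exact/measurable_EFinP.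
apply: (@le_lt_trans _ _ ((`|M|)%:E * P setT)%E); last first.
  by rewrite probability_setT mule1 ltry.
apply: integral_le_bound => //; first exact/measurable_EFinP.
exists N; split => // w /= wM; apply: contrapT => Nw; apply: wM => _.
by rewrite lee_fin (le_trans (fM w Nw)) // ler_norm.
Qed.

Lemma bounded_off_affine a b f : bounded_off f -> bounded_off (fun w => a * f w + b).
Proof.
move=> [mf [M fM]]; split.
  by apply: measurable_funD => //; exact: measurable_funM.
exists (`|a| * M + `|b|) => w Nw; apply: le_trans (ler_normD _ _) _.
by rewrite normrM lerD2r ler_wpM2l // fM.
Qed.

Lemma bounded_offB f g :
  bounded_off f -> bounded_off g -> bounded_off (fun w => f w - g w).
Proof.
move=> [mf [M fM]] [mg [M' gM]]; split; first exact: measurable_funB.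
exists (M + M') => w Nw; apply: le_trans (ler_normB _ _) _.
by apply: lerD; [exact: fM | exact: gM].
Qed.

Lemma bounded_off_ln (f : T -> R) (L U : R) : 0 < L -> measurable_fun setT f ->
  (forall w, ~ N w -> L <= f w <= U) -> bounded_off (fun w => ln (f w)).
Proof.
move=> L0 mf fLU; split; first exact: measurableT_comp mf.
by exists (`|ln L| + `|ln U|) => w /fLU; exact: normr_ln_le.
Qed.

Lemma Rintegral_affine a b f : bounded_off f ->
  \int[P]_(w in ~` N) (a * f w + b) = a * \int[P]_(w in ~` N) f w + b.
Proof.
move=> bf; have intf := bounded_off_integrable bf.
rewrite RintegralD //; last exact: finite_measure_integrable_cst.
  rewrite RintegralZl ?Rintegral_cst // (_ : fine _ = 1) ?mulr1 //.
  by have := congr1 fine probability_setC_null; apply.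
by apply: eq_integrable (integrableZl mNC a intf) => // w _; rewrite /= EFinM.
Qed.

Lemma log_optimal_ratio_le1 (W V : T -> R) (L U : R) :
  0 < L -> measurable_fun setT W -> measurable_fun setT V ->
  (forall w, ~ N w -> L <= W w <= U /\ L <= V w <= U) ->
  (forall t, 0 < t <= 1 ->
    (\int[P]_w (ln (V w + t * (W w - V w)))%:E <= \int[P]_w (ln (V w))%:E)%E) ->
  (\int[P]_(w in ~` N) (W w / V w)%:E <= 1)%E.
Proof.
move=> L0 mW mV WVLU optV; set M := U ^+ 2 / L ^+ 2.
have M0 : 0 <= M by rewrite divr_ge0 ?sqr_ge0.
have VLU w : ~ N w -> L <= V w <= U by move=> /WVLU[].
have bratio : bounded_off (fun w => W w / V w).
  split.
    by apply: measurable_funM => //; apply: measurableT_comp; [exact: measurable_inv|].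
  exists (U / L) => w /WVLU[/andP[LW WU] /andP[LV VU]].
  have V0 : 0 < V w by apply: lt_le_trans LV.
  rewrite ger0_norm ?divr_ge0 ?(le_trans (ltW L0)) //.
  by rewrite ler_pM ?invr_ge0 ?(le_trans (ltW L0)) // lef_pV2 ?posrE.
have blnV := bounded_off_ln L0 mV VLU.
have blnVt t : 0 < t <= 1 -> bounded_off (fun w => ln (V w + t * (W w - V w))).
  move=> /andP[t0 t1]; apply: (bounded_off_ln (U := U) L0).
    by apply: measurable_funD => //; apply: measurable_funM => //;
      exact: measurable_funB.
  by move=> w /WVLU[WLU VLU']; apply: lerp_bounds => //; rewrite (ltW t0) t1.
rewrite integral_setC_bounded_off // lee_fin -subr_le0.
apply: (le0_of_le_small_mul M0) => t /[dup] t01 /andP[t0 t1].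
have gain : \int[P]_(w in ~` N) (t * (W w / V w) + (- t - t ^+ 2 * M)) <=
    \int[P]_(w in ~` N) (ln (V w + t * (W w - V w)) - ln (V w)).
  apply: le_Rintegral => //.
  - exact: bounded_off_integrable (bounded_off_affine _ _ bratio).
  - exact: bounded_off_integrable (bounded_offB (blnVt t t01) blnV).
  move=> w /WVLU[WLU VLU']; have := ln_lerp_ge L0 VLU' WLU t01; rewrite -/M; lra.
have no_gain : \int[P]_(w in ~` N) ln (V w + t * (W w - V w)) <=
    \int[P]_(w in ~` N) ln (V w).
  by rewrite -lee_fin -!integral_bounded_off //; [exact: optV | exact: blnVt].
rewrite Rintegral_affine // RintegralB ?bounded_off_integrable // in gain;
  last exact: blnVt.
have : t * (\int[P]_(w in ~` N) (W w / V w) - 1) <= t * (t * M) by lra.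
by rewrite ler_pM2l.
Qed.

End off_null_set.

Section kelly.
Context {d} {T : measurableType d} {R : realType} (P : probability T R) {m : nat}
  (X : nat -> 'I_m -> T -> R) (N : set T) (c C : R).
Hypotheses (mX : forall k i, measurable_fun setT (X k i))
  (mN : measurable N) (PN0 : P N = 0%E) (c0 : 0 < c)
  (XcC : forall w, ~ N w -> forall k i, c <= 1 + X k i w <= C).

Lemma wealth_bounds_off n K w : simplexK K -> ~ N w ->
  c ^+ n <= wealth X n K w <= C ^+ n.
Proof. by move=> sK Nw; exact: wealth_bounds (ltW c0) (XcC Nw) sK. Qed.

Lemma wealth_gt0_off n K w : simplexK K -> ~ N w -> 0 < wealth X n K w.
Proof.
move=> sK Nw; have /andP[cW _] := wealth_bounds_off n sK Nw.
exact: lt_le_trans (exprn_gt0 n c0) cW.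
Qed.

Lemma kelly_wealth_ratio_le1 n K K' : (0 < n)%N -> simplexK K ->
  kelly_optimal P X n K' ->
  (\int[P]_(w in ~` N) (wealth X n K w / wealth X n K' w)%:E <= 1)%E.
Proof.
move=> n0 sK [sK' optK'].
apply: (log_optimal_ratio_le1 mN PN0 (L := c ^+ n) (U := C ^+ n)).
- exact: exprn_gt0.
- exact: measurable_wealth.
- exact: measurable_wealth.
- by move=> w Nw; split; exact: wealth_bounds_off.
move=> t /andP[t0 t1]; have t01 : 0 <= t <= 1 by rewrite (ltW t0).
have := optK' _ (simplex_lerp sK' sK t01).
rewrite /gn lee_pmul2l ?lte_fin ?invr_gt0 ?ltr0n //.
by under eq_integral do rewrite wealth_lerp.
Qed.

Lemma relative_growth_tail n K K' e : (0 < n)%N -> simplexK K ->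
  kelly_optimal P X n K' -> 0 < e ->
  (P [set w | (e < relative_growth X n K K' w)%R] <= (expR (- e) ^+ n)%:E)%E.
Proof.
move=> n0 sK optK' e0; have sK' := optK'.1.
set rho := fun w => wealth X n K w / wealth X n K' w.
have mrho : measurable_fun setT rho.
  apply: measurable_funM; first exact: measurable_wealth.
  by apply: measurableT_comp; [exact: measurable_inv | exact: measurable_wealth].
set A := ~` N `&` [set w | expR (n%:R * e) < rho w].
have mA : measurable A.
  by apply: measurableI; [exact: measurableC | exact: measurable_superlevel].
have tail_sub : [set w | e < relative_growth X n K K' w] `<=` N `|` A.
  move=> w /= ew; have [Nw|Nw] := pselect (N w); [by left | right; split => //=].
  have rho0 : 0 < rho w by rewrite divr_gt0 ?wealth_gt0_off.
  have n_gt0 : 0 < n%:R :> R by rewrite ltr0n.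
  move: ew; rewrite /relative_growth -(ltr_pM2l n_gt0) mulrA mulfV ?gt_eqF // mul1r.
  by rewrite -[rho w]lnK ?posrE // ltr_expR.
have markov : ((expR (n%:R * e))%:E * P A <= 1)%E.
  apply: le_trans (kelly_wealth_ratio_le1 n0 sK optK').
  apply: markov_setI => //; first exact: measurableC.
  by move=> w Nw; rewrite divr_ge0 // ltW // wealth_gt0_off.
apply: le_trans (le_measure _ _ _ tail_sub) _; rewrite ?inE.
- exact/measurable_superlevel/measurable_relative_growth.
- exact: measurableU.
apply: le_trans (measureU2 _ mN mA) _.
rewrite [X in (X + _)%E](_ : _ = 0%E) ?add0e; last exact: PN0.
by rewrite -expRM_natl mulrN expRN -[_%:E]mule1 lee_pdivlMl ?expR_gt0.
Qed.

Lemma relative_growth_summable (Kstar : nat -> 'I_m -> R) K e : simplexK K ->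
  (forall n, (0 < n)%N -> kelly_optimal P X n (Kstar n)) -> 0 < e ->
  (\sum_(n <oo) P [set w | (e < relative_growth X n K (Kstar n) w)%R] < +oo)%E.
Proof.
move=> sK optKstar e0.
apply: le_lt_trans (nneseries_geometric_lty (q := expR (- e)) _); last first.
  by rewrite expR_ge0 expR_lt1 oppr_lt0.
apply: lee_nneseries => [n _ _|[|n] _]; first exact: measure_ge0.
  rewrite [X in P X](_ : _ = set0) ?measure0 ?lee_fin ?expr0 //.
  by apply/seteqP; split => w //=; rewrite /relative_growth invr0 mul0r ltNge ltW.
exact: relative_growth_tail _ sK (optKstar _ _) e0.
Qed.

End kelly.

Lemma ae_return_bounds {d} {T : measurableType d} {R : realType} (P : probability T R)
    {m : nat} (X : nat -> 'I_m -> T -> R) (Xmin Xmax : 'I_m -> R) :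
  (forall i, -1 < Xmin i) ->
  (forall k i, {ae P, forall w, Xmin i <= X k i w <= Xmax i}) ->
  exists N c C, [/\ measurable N, P N = 0%E, 0 < c &
    forall w, ~ N w -> forall k i, c <= 1 + X k i w <= C].
Proof.
move=> Xmin_gt Xae.
have [N [mN PN0 XN]] : {ae P, forall w k i, Xmin i <= X k i w <= Xmax i}.
  by apply: ae_foralln => k; apply: filter_forall => i; exact: Xae.
set c := \big[Num.min/1]_i (1 + Xmin i); set C := \big[Num.max/1]_i (1 + Xmax i).
exists N, c, C; split => //.
  apply: (big_ind (fun x => 0 < x)) => //; first by move=> x y; rewrite lt_min => -> ->.
  by move=> i _; rewrite -ltrBlDl sub0r.
move=> w Nw k i; have /andP[lo hi] : Xmin i <= X k i w <= Xmax i.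
  by apply: contrapT => XNw; apply: Nw; apply: XN => /(_ k i).
have c_le : c <= 1 + Xmin i by exact: bigmin_le_cond.
have C_ge : 1 + Xmax i <= C by exact: le_bigmax_cond.
by rewrite (le_trans c_le) ?(le_trans _ C_ge) ?lerD2l.
Qed.

Theorem lemma2 (d : measure_display) (T : measurableType d) (R : realType)
  (P : probability T R) (m : nat) (X : nat -> 'I_m -> T -> R)
  (Xmin Xmax : 'I_m -> R) (r : R) (Kstar : nat -> 'I_m -> R) :
  (2 <= m)%N ->
  (forall k i, measurable_fun setT (X k i)) ->
  vec_independent P X ->
  vec_ident_distrib P X ->
  (forall i, -1 < Xmin i) ->
  (forall k i, {ae P, forall w, Xmin i <= X k i w <= Xmax i}) ->
  0 <= r ->
  (exists i0 : 'I_m, forall k, {ae P, forall w, X k i0 w = r}) ->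
  (forall n, (1 <= n)%N ->
     simplexK (Kstar n) /\
     (forall K, simplexK K -> (gn P X n K <= gn P X n (Kstar n))%E)) ->
  forall K : 'I_m -> R, simplexK K ->
    {ae P, forall w,
      (limn_esup (fun n : nat =>
         ((n%:R)^-1 * ln (wealth X n K w / wealth X n (Kstar n) w))%:E)
       <= 0%E)%E}.
Proof.
move=> _ mX _ _ Xmin_gt Xae _ _ optKstar K sK.
have [N [c [C [mN PN0 c0 XcC]]]] := ae_return_bounds Xmin_gt Xae.
apply: (ae_limn_esup_le0 (u := fun n => relative_growth X n K (Kstar n))) => [n|e e0].
  exact: measurable_relative_growth.
by apply: (relative_growth_summable mX mN PN0 c0 XcC).
Qed.
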